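(* In the setting described in the context, the following three conditions are equivalent: (1) there exists a capacity $\mu:2^{\mathcal C}\to L$ representing the training data, i.e. $S_\mu(x^{(k)})=\alpha^{(k)}$ for all $k\in\{1,\dots,N\}$; (2) the max–min system $(S)$ is consistent and $e(\mathcal C)=1$; (3) the min–max system $(\Sigma)$ is consistent and $f(\emptyset)=0$.
   Context: Let $\mathcal C=\{1,\dots,n\}$ and let $L$ be either a finite totally ordered set $0=\xi_1<\dots<\xi_l=1$ or $L=[0,1]$. A capacity is a map $\mu:2^{\mathcal C}\to L$ with $\mu(\emptyset)=0$, $\mu(\mathcal C)=1$, and $A\subseteq B\Rightarrow\mu(A)\le\mu(B)$. The Sugeno integral of $x\in L^n$ is $S_\mu(x)=\max_{A\subseteq\mathcal C}\min(\min_{i\in A}x_i,\mu(A))$ with $\min_{i\in\emptyset}x_i=1$. Training data: $N$ pairs $(x^{(k)},\alpha^{(k)})$ with $x^{(k)}\in L^n$, $\alpha^{(k)}\in L$. For nonempty $A$, $m_{k,A}=\min_{i\in A}x^{(k)}_i$; for $A\subsetneq\mathcal C$, $\gamma_{k,A}=\max_{i\in\mathcal C\setminus A}x^{(k)}_i$. The system $(S)$ has unknowns $\xi_A\in L$, $A\subseteq\mathcal C$ nonempty, and equations $\max_{A\neq\emptyset}\min(m_{k,A},\xi_A)=\alpha^{(k)}$ for $k=1,\dots,N$. The system $(\Sigma)$ has unknowns $\xi_A\in L$, $A\subsetneq\mathcal C$, and equations $\min_{A\subsetneq\mathcal C}\max(\gamma_{k,A},\xi_A)=\alpha^{(k)}$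 for $k=1,\dots,N$. A system is consistent if it has a solution in $L$. Gödel implication: $a\to_G b=1$ if $a\le b$, else $b$; epsilon product: $a\,\epsilon\,b=b$ if $a<b$, else $0$. Set $e(A)=\min_{k}(m_{k,A}\to_G\alpha^{(k)})$ for nonempty $A$ and $f(B)=\max_k(\gamma_{k,B}\,\epsilon\,\alpha^{(k)})$ for $B\subsetneq\mathcal C$. *)

From mathcomp Require Import all_boot all_order all_algebra.
Set Implicit Arguments. Unset Strict Implicit. Unset Printing Implicit Defensive.
Import Order.TTheory GRing.Theory Num.Theory.
Local Open Scope ring_scope.

Section Sugeno.
Variable R : realDomainType.

Definition is_scale (L : R -> Prop) : Prop :=
  [/\ L 0, L 1, (forall y, L y -> 0 <= y <= 1) &
      ((exists s : seq R, forall y, L y <-> y \in s) \/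
       (forall y, L y <-> 0 <= y <= 1))].

Variable n : nat.

Definition capacity (L : R -> Prop) (mu : {set 'I_n} -> R) : Prop :=
  [/\ forall A, L (mu A), mu set0 = 0, mu setT = 1 &
      forall A B : {set 'I_n}, A \subset B -> mu A <= mu B].

(* Sugeno integral, with min over the empty set equal to 1 *)
Definition sugeno (mu : {set 'I_n} -> R) (x : 'I_n -> R) : R :=
  \big[Num.max/0]_(A : {set 'I_n}) Num.min (\big[Num.min/1]_(i in A) x i) (mu A).

(* m_{k,A} = min_{i in A} x_i  (used for nonempty A) *)
Definition mA (x : 'I_n -> R) (A : {set 'I_n}) : R := \big[Num.min/1]_(i in A) x i.
(* gamma_{k,A} = max_{i in C \ A} x_i  (used for A proper) *)
Definition gammaA (x : 'I_n -> R) (A : {set 'I_n}) : R := \big[Num.max/0]_(i in ~: A) x i.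

Definition godel (a b : R) : R := if a <= b then 1 else b.
Definition eps_prod (a b : R) : R := if a < b then b else 0.

Variable N : nat.
Variables (x : 'I_N -> 'I_n -> R) (alpha : 'I_N -> R).

Definition S_consistent (L : R -> Prop) : Prop :=
  exists xi : {set 'I_n} -> R,
    (forall A, A != set0 -> L (xi A)) /\
    forall k, \big[Num.max/0]_(A : {set 'I_n} | A != set0) Num.min (mA (x k) A) (xi A)
              = alpha k.

Definition Sigma_consistent (L : R -> Prop) : Prop :=
  exists xi : {set 'I_n} -> R,
    (forall A, A != setT -> L (xi A)) /\
    forall k, \big[Num.min/1]_(A : {set 'I_n} | A != setT) Num.max (gammaA (x k) A) (xi A)
              = alpha k.

Definition e_fun (A : {set 'I_n}) : R := \big[Num.min/1]_(k < N) godel (mA (x k) A) (alpha k).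
Definition f_fun (B : {set 'I_n}) : R := \big[Num.max/0]_(k < N) eps_prod (gammaA (x k) B) (alpha k).

End Sugeno.

From mathcomp Require Import all_boot all_order all_algebra.
Set Implicit Arguments. Unset Strict Implicit. Unset Printing Implicit Defensive.
Import Order.TTheory GRing.Theory Num.Theory.
Local Open Scope ring_scope.

(* A capacity with mu(empty) = 0 is a solution of (S) (the empty set only
   contributes 0 to the Sugeno integral) and, by the max-min/min-max duality of
   the Sugeno integral, a solution of (Sigma).  Conversely, by residuation of
   min against the Goedel implication, e is the greatest solution of (S) as soon
   as (S) is consistent; it is monotone, so setting it to 0 on the empty set
   gives a capacity exactly when e(C) = 1.  Dually, the epsilon product makes f
   the least solution of (Sigma), and setting it to 1 on C gives a capacity
   exactly when f(empty) = 0. *)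

Section SetFunctions.
Variables (R : realDomainType) (n : nat).
Implicit Types (y : 'I_n -> R) (A B : {set 'I_n}) (mu : {set 'I_n} -> R).

Definition maxmin mu y :=
  \big[Num.max/0]_(A : {set 'I_n} | A != set0) Num.min (mA y A) (mu A).

Definition minmax mu y :=
  \big[Num.min/1]_(A : {set 'I_n} | A != setT) Num.max (gammaA y A) (mu A).

Lemma mA_le1 y A : mA y A <= 1.
Proof. exact: bigmin_le_id. Qed.

Lemma gammaA_ge0 y A : 0 <= gammaA y A.
Proof. exact: bigmax_ge_id. Qed.

Lemma mA_subset y A B : A \subset B -> mA y B <= mA y A.
Proof.
move=> sAB; apply: le_bigmin => [|i Ai]; first exact: mA_le1.
exact/bigmin_le_cond/(subsetP sAB).
Qed.

Lemma gammaA_subset y A B : A \subset B -> gammaA y B <= gammaA y A.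
Proof.
move=> sAB; apply: bigmax_le => [|i]; first exact: gammaA_ge0.
by rewrite inE => nBi; apply: le_bigmax_cond; rewrite inE (contra (subsetP sAB i)).
Qed.

Lemma mA_le_gammaA y A B : ~~ (A \subset B) -> mA y A <= gammaA y B.
Proof.
case/subsetPn=> i Ai nBi; apply: (@le_trans _ _ (y i)); first exact: bigmin_le_cond.
by apply: le_bigmax_cond; rewrite inE.
Qed.

Lemma le_maxmin mu mu' y :
  (forall A, A != set0 -> mu A <= mu' A) -> maxmin mu y <= maxmin mu' y.
Proof. by move=> le_mu; apply: le_bigmax2 => A /le_mu; apply: le_min2. Qed.

Lemma le_minmax mu mu' y :
  (forall A, A != setT -> mu A <= mu' A) -> minmax mu y <= minmax mu' y.
Proof. by move=> le_mu; apply: le_bigmin2 => A /le_mu; apply: le_max2. Qed.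

Lemma sugeno_maxmin mu y : mu set0 = 0 -> sugeno mu y = maxmin mu y.
Proof.
move=> mu0; apply: le_anti; apply/andP; split.
  apply: bigmax_le => [|A _]; first exact: bigmax_ge_id.
  have [->|nzA] := eqVneq A set0; last exact: le_bigmax_cond.
  by rewrite mu0 ge_min bigmax_ge_id orbT.
by apply: bigmax_le => [|A _]; [exact: bigmax_ge_id | exact: le_bigmax].
Qed.

Lemma setT_neq0 : (0 < n)%N -> [set: 'I_n] != set0.
Proof. by move=> n_gt0; apply/set0Pn; exists (Ordinal n_gt0). Qed.

Lemma mA_le_sugeno mu y : mu setT = 1 -> mA y setT <= sugeno mu y.
Proof.
move=> mu1; apply: le_trans (le_bigmax _ _ setT).
by rewrite mu1 le_min lexx mA_le1.
Qed.

Lemma sugeno_le_gammaA0 mu y : mu set0 = 0 -> sugeno mu y <= gammaA y set0.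
Proof.
move=> mu0; apply: bigmax_le => [|A _]; first exact: gammaA_ge0.
have [->|nzA] := eqVneq A set0; first by rewrite mu0 ge_min gammaA_ge0 orbT.
by rewrite ge_min mA_le_gammaA // subset0.
Qed.

Section Duality.
Variable mu : {set 'I_n} -> R.
Hypothesis mu_mono : forall A B, A \subset B -> mu A <= mu B.

Lemma sugeno_le_minmax y : sugeno mu y <= minmax mu y.
Proof.
apply: le_bigmin => [|B _].
  by apply: bigmax_le => // A _; rewrite ge_min mA_le1.
apply: bigmax_le => [|A _]; first by rewrite le_max gammaA_ge0.
have [sAB|nsAB] := boolP (A \subset B).
  by rewrite ge_min [mu A <= _]le_max mu_mono ?orbT.
by rewrite ge_min [mA y A <= _]le_max mA_le_gammaA.
Qed.

Hypotheses (n_gt0 : (0 < n)%N) (mu0 : mu set0 = 0) (mu1 : mu setT = 1).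

(* The set where y exceeds the integral is a proper subset realising the minimum. *)
Lemma minmax_le_sugeno y : (forall i, y i <= 1) -> minmax mu y <= sugeno mu y.
Proof.
move=> y_le1; set s := sugeno mu y; set B := [set i | s < y i].
have mu_le_s A : A != set0 -> A \subset B -> mu A <= s.
  case/set0Pn=> j Aj /subsetP sAB.
  have : Num.min (mA y A) (mu A) <= s by apply: le_bigmax.
  rewrite ge_min; case/orP=> //; rewrite leNgt => /negP[].
  apply/bigmin_gtP; split=> [|i /sAB]; last by rewrite inE.
  by move: (sAB j Aj); rewrite inE => /lt_le_trans->.
have nTB : B != setT.
  pose i0 := Ordinal n_gt0; apply/eqP=> BT.
  have : i0 \in B by rewrite BT inE.
  rewrite inE ltNge => /negP[]; apply: le_trans (y_le1 i0) _.
  by rewrite -mu1 mu_le_s ?BT ?setT_neq0.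
apply: (bigmin_inf B) => //; rewrite ge_max; apply/andP; split.
  by apply: bigmax_le => [|i]; [exact: bigmax_ge_id | rewrite !inE -leNgt].
have [->|nzB] := eqVneq B set0; first by rewrite mu0 bigmax_ge_id.
exact: mu_le_s.
Qed.

Lemma sugeno_minmax y : (forall i, y i <= 1) -> sugeno mu y = minmax mu y.
Proof.
by move=> y_le1; apply: le_anti; rewrite sugeno_le_minmax minmax_le_sugeno.
Qed.

End Duality.
End SetFunctions.

Section Residuation.
Variable R : realDomainType.
Implicit Types a b c : R.

Lemma le_godel a b c : c <= 1 -> (c <= godel a b) = (Num.min a c <= b).
Proof.
by move=> c1; rewrite /godel ge_min; case: (leP a b).
Qed.

Lemma eps_prod_le a b c : 0 <= c -> (eps_prod a b <= c) = (b <= Num.max a c).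
Proof.
by move=> c0; rewrite /eps_prod le_max; case: (ltP a b).
Qed.

Lemma min_stable (P : R -> Prop) a b : P a -> P b -> P (Num.min a b).
Proof. by rewrite minEle; case: ifP. Qed.

Lemma max_stable (P : R -> Prop) a b : P a -> P b -> P (Num.max a b).
Proof. by rewrite maxEle; case: ifP. Qed.

End Residuation.

Section Representation.
Variables (R : realDomainType) (L : R -> Prop) (n N : nat).
Variables (x : 'I_N -> 'I_n -> R) (alpha : 'I_N -> R).
Hypotheses (L0 : L 0) (L1 : L 1) (L_unit : forall y, L y -> 0 <= y <= 1).
Hypotheses (n_gt0 : (0 < n)%N) (xL : forall k i, L (x k i)) (alphaL : forall k, L (alpha k)).
Implicit Types (A B : {set 'I_n}) (xi : {set 'I_n} -> R).

Local Notation e := (e_fun x alpha).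
Local Notation f := (f_fun x alpha).

Definition representable :=
  exists mu, capacity L mu /\ forall k, sugeno mu (x k) = alpha k.

Let alpha_ge0 k : 0 <= alpha k. Proof. by case/andP: (L_unit (alphaL k)). Qed.
Let alpha_le1 k : alpha k <= 1. Proof. by case/andP: (L_unit (alphaL k)). Qed.
Let x_le1 k i : x k i <= 1. Proof. by case/andP: (L_unit (xL k i)). Qed.

Lemma min_mA_e_le k A : Num.min (mA (x k) A) (e A) <= alpha k.
Proof. by rewrite -le_godel ?bigmin_le_id //; apply: bigmin_le. Qed.

Lemma le_e_fun c A :
  c <= 1 -> (forall k, Num.min (mA (x k) A) c <= alpha k) -> c <= e A.
Proof. by move=> c1 le_c; apply: le_bigmin => // k _; rewrite le_godel. Qed.

Lemma e_fun_subset A B : A \subset B -> e A <= e B.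
Proof.
move=> sAB; apply: le_e_fun => [|k]; first exact: bigmin_le_id.
by apply: le_trans (min_mA_e_le k A); rewrite le_min2 ?mA_subset.
Qed.

Lemma e_fun_scale A : L (e A).
Proof.
rewrite /e_fun; elim/big_ind: _ => // [|k _]; first exact: min_stable.
by rewrite /godel; case: ifP.
Qed.

Lemma maxmin_e_le k : maxmin e (x k) <= alpha k.
Proof. by apply: bigmax_le => // A _; apply: min_mA_e_le. Qed.

Lemma S_solution_le_e xi :
  (forall k, maxmin xi (x k) = alpha k) ->
  forall A, A != set0 -> xi A <= 1 -> xi A <= e A.
Proof.
move=> sol A nzA xi1; apply: le_e_fun => // k.
by rewrite -sol; apply: le_bigmax_cond.
Qed.

Lemma S_consistent_maxmin_e :
  S_consistent x alpha L -> forall k, maxmin e (x k) = alpha k.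
Proof.
case=> xi [xiL sol] k; apply: le_anti; rewrite maxmin_e_le -{1}(sol k).
apply: le_maxmin => A nzA; apply: S_solution_le_e => //.
by case/andP: (L_unit (xiL A nzA)).
Qed.

Lemma max_gammaA_f_ge k A : alpha k <= Num.max (gammaA (x k) A) (f A).
Proof. by rewrite -eps_prod_le ?bigmax_ge_id //; apply: le_bigmax. Qed.

Lemma f_fun_le c A :
  0 <= c -> (forall k, alpha k <= Num.max (gammaA (x k) A) c) -> f A <= c.
Proof. by move=> c0 ge_c; apply: bigmax_le => // k _; rewrite eps_prod_le. Qed.

Lemma f_fun_subset A B : A \subset B -> f A <= f B.
Proof.
move=> sAB; apply: f_fun_le => [|k]; first exact: bigmax_ge_id.
by apply: le_trans (max_gammaA_f_ge k B) _; rewrite le_max2 ?gammaA_subset.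
Qed.

Lemma f_fun_scale A : L (f A).
Proof.
rewrite /f_fun; elim/big_ind: _ => // [|k _]; first exact: max_stable.
by rewrite /eps_prod; case: ifP.
Qed.

Lemma minmax_f_ge k : alpha k <= minmax f (x k).
Proof. by apply: le_bigmin => // A _; apply: max_gammaA_f_ge. Qed.

Lemma Sigma_solution_ge_f xi :
  (forall k, minmax xi (x k) = alpha k) ->
  forall A, A != setT -> 0 <= xi A -> f A <= xi A.
Proof.
move=> sol A nTA xi0; apply: f_fun_le => // k.
by rewrite -sol; apply: bigmin_le_cond.
Qed.

Lemma Sigma_consistent_minmax_f :
  Sigma_consistent x alpha L -> forall k, minmax f (x k) = alpha k.
Proof.
case=> xi [xiL sol] k; apply: le_anti; rewrite minmax_f_ge andbT -{1}(sol k).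
apply: le_minmax => A nTA; apply: Sigma_solution_ge_f => //.
by case/andP: (L_unit (xiL A nTA)).
Qed.

Definition e_capacity A := if A == set0 then 0 else e A.
Definition f_capacity A := if A == setT then 1 else f A.

Lemma capacity_e_capacity : e setT = 1 -> capacity L e_capacity.
Proof.
move=> eT; split=> [A | | | A B sAB]; rewrite /e_capacity.
- by case: ifP => _; last exact: e_fun_scale.
- by rewrite eqxx.
- by rewrite (negPf (setT_neq0 n_gt0)).
case: ifPn => [_|nzA].
  by case: ifP => // _; case/andP: (L_unit (e_fun_scale B)).
have nzB : B != set0 by apply: contraNneq nzA => B0; rewrite -subset0 -B0.
by rewrite (negPf nzB); apply: e_fun_subset.
Qed.

Lemma capacity_f_capacity : f set0 = 0 -> capacity L f_capacity.
Proof.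
move=> f0; split=> [A | | | A B sAB]; rewrite /f_capacity.
- by case: ifP => _; last exact: f_fun_scale.
- by rewrite eq_sym (negPf (setT_neq0 n_gt0)).
- by rewrite eqxx.
case: (ifPn (B == setT)) => [_|nTB].
  by case: ifP => // _; case/andP: (L_unit (f_fun_scale A)).
have nTA : A != setT by apply: contraNneq nTB => AT; rewrite -subTset -AT.
by rewrite (negPf nTA); apply: f_fun_subset.
Qed.

Lemma maxmin_e_capacity y : maxmin e_capacity y = maxmin e y.
Proof. by apply: eq_bigr => A nzA; rewrite /e_capacity (negPf nzA). Qed.

Lemma minmax_f_capacity y : minmax f_capacity y = minmax f y.
Proof. by apply: eq_bigr => A nTA; rewrite /f_capacity (negPf nTA). Qed.

Lemma representable_S_consistent :
  representable -> S_consistent x alpha L /\ e setT = 1.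
Proof.
case=> mu [[muL mu0 mu1 _] rep]; split.
  by exists mu; split=> // k; rewrite -(rep k) sugeno_maxmin.
by apply: bigmin_eq_id => k _; rewrite /godel -(rep k) mA_le_sugeno.
Qed.

Lemma S_consistent_representable :
  S_consistent x alpha L /\ e setT = 1 -> representable.
Proof.
case=> cons eT; exists e_capacity; split=> [|k]; first exact: capacity_e_capacity.
rewrite sugeno_maxmin; last by rewrite /e_capacity eqxx.
by rewrite maxmin_e_capacity S_consistent_maxmin_e.
Qed.

Lemma representable_Sigma_consistent :
  representable -> Sigma_consistent x alpha L /\ f set0 = 0.
Proof.
case=> mu [[muL mu0 mu1 mu_mono] rep]; split.
  exists mu; split=> // k.
  by rewrite -(rep k) (sugeno_minmax mu_mono n_gt0 mu0 mu1 (x_le1 k)).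
by apply: bigmax_eq_id => k _; rewrite /eps_prod -(rep k) ltNge sugeno_le_gammaA0.
Qed.

Lemma Sigma_consistent_representable :
  Sigma_consistent x alpha L /\ f set0 = 0 -> representable.
Proof.
case=> cons f0; have [capL cap0 cap1 cap_mono] := capacity_f_capacity f0.
exists f_capacity; split=> // k.
rewrite (sugeno_minmax cap_mono n_gt0 cap0 cap1 (x_le1 k)).
by rewrite minmax_f_capacity Sigma_consistent_minmax_f.
Qed.

End Representation.

Theorem theorem1 (R : realDomainType) (L : R -> Prop) (n N : nat)
    (x : 'I_N -> 'I_n -> R) (alpha : 'I_N -> R) :
  is_scale L -> (0 < n)%N ->
  (forall k i, L (x k i)) -> (forall k, L (alpha k)) ->
  [/\ (exists mu, capacity L mu /\ forall k, sugeno mu (x k) = alpha k)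
        <-> (S_consistent x alpha L /\ e_fun x alpha setT = 1),
      (S_consistent x alpha L /\ e_fun x alpha setT = 1)
        <-> (Sigma_consistent x alpha L /\ f_fun x alpha set0 = 0) &
      (exists mu, capacity L mu /\ forall k, sugeno mu (x k) = alpha k)
        <-> (Sigma_consistent x alpha L /\ f_fun x alpha set0 = 0)].
Proof.
case=> L0 L1 L_unit _ n_gt0 xL alphaL.
have S_iff : representable L x alpha <-> S_consistent x alpha L /\ e_fun x alpha setT = 1.
  split; [exact: representable_S_consistent | exact: S_consistent_representable].
have Sigma_iff :
    representable L x alpha <-> Sigma_consistent x alpha L /\ f_fun x alpha set0 = 0.
  split; [exact: representable_Sigma_consistent | exact: Sigma_consistent_representable].
by split=> //; apply: iff_trans (iff_sym S_iff) Sigma_iff.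
Qed.
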